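(* Let $\varepsilon>0$, let $p_{m,n}=u(m\varepsilon)+iv(n\varepsilon)$ be a rectangular lattice and let $G$ be a CR-mapping on it. Define $Q_{m,n}=\frac{p_{m,n+1}-p_{m,n}}{p_{m,n}-p_{m-1,n}}\cdot\frac{G_{m,n}-G_{m-1,n}}{G_{m,n+1}-G_{m,n}}$ and let $F$ be defined by $Q=e^{\varepsilon F}$. Then, at every index $(m,n)$ where the quantities are defined, $$F_{m-1,n+1}-F_{m,n}=M\,(F_{m,n+1}-F_{m-1,n})+2i\varepsilon\,\Xi\,\frac{F_{m,n+1}+F_{m-1,n}}{2}+\varepsilon^2\mathcal R,$$ where, with $a=p_{m,n+1}-p_{m,n}$, $a'=p_{m,n+2}-p_{m,n+1}$, $b=p_{m,n}-p_{m-1,n}$, $b'=p_{m-1,n}-p_{m-2,n}$, $$M=-\frac{b\,b'-a\,a'}{(b'+a)(b+a')},\qquad \Xi=-\frac{b\,a-b'\,a'}{i\varepsilon\,(b'+a)(b+a')},$$ $$\mathcal R=\frac{1}{\varepsilon^3}\Big(\log\frac{a'e^{\varepsilon F_{m,n+1}}+b}{a'+b\,e^{\varepsilon F_{m,n+1}}}+\varepsilon\frac{b-a'}{b+a'}F_{m,n+1}-\log\frac{a\,e^{\varepsilon F_{m-1,n}}+b'}{a+b'e^{\varepsilon F_{m-1,n}}}-\varepsilon\frac{b'-a}{b'+a}F_{m-1,n}\Big).$$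
   Context: $u,v$ are real functions with positive derivatives (so the lattice $p_{m,n}=u(m\varepsilon)+iv(n\varepsilon)$ is a rectangular lattice in $\mathbb C$). The cross-ratio of distinct $q_1,\dots,q_4\in\mathbb C$ is $\mathrm{CR}(q_1,q_2,q_3,q_4)=\frac{(q_1-q_2)(q_3-q_4)}{(q_2-q_3)(q_4-q_1)}$. A CR-mapping $G$ on the lattice satisfies $\mathrm{CR}(G_{m-1,n},G_{m,n},G_{m,n+1},G_{m-1,n+1})=\mathrm{CR}(p_{m-1,n},p_{m,n},p_{m,n+1},p_{m-1,n+1})$ for all rectangles (with the $G$-values involved mutually distinct). In the identity, $F$ and $\log$ are taken with appropriate branches of the complex logarithm (the identity arises by taking the logarithm of a multiplicative identity for $Q$ and dividing by $\varepsilon$). *)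

From Stdlib Require Import Reals ZArith.
From Coquelicot Require Import Coquelicot.

Definition cexp (z : C) : C :=
  (exp (Re z) * cos (Im z), exp (Re z) * sin (Im z))%R.

Definition CR (q1 q2 q3 q4 : C) : C :=
  ((q1 - q2) * (q3 - q4) / ((q2 - q3) * (q4 - q1)))%C.

Definition lattice (u v : R -> R) (eps : R) (m n : Z) : C :=
  (u (IZR m * eps), v (IZR n * eps))%R.

Definition distinct4 (q1 q2 q3 q4 : C) : Prop :=
  q1 <> q2 /\ q1 <> q3 /\ q1 <> q4 /\ q2 <> q3 /\ q2 <> q4 /\ q3 <> q4.

Definition CR_mapping (p G : Z -> Z -> C) : Prop :=
  forall m n : Z,
    distinct4 (G (m-1)%Z n) (G m n) (G m (n+1)%Z) (G (m-1)%Z (n+1)%Z) /\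
    CR (G (m-1)%Z n) (G m n) (G m (n+1)%Z) (G (m-1)%Z (n+1)%Z)
    = CR (p (m-1)%Z n) (p m n) (p m (n+1)%Z) (p (m-1)%Z (n+1)%Z).

Definition Qf (p G : Z -> Z -> C) (m n : Z) : C :=
  ((p m (n+1)%Z - p m n) / (p m n - p (m-1)%Z n)
   * ((G m n - G (m-1)%Z n) / (G m (n+1)%Z - G m n)))%C.

From Stdlib Require Import Reals ZArith Lra Lia.
From Coquelicot Require Import Coquelicot.

(* The cross-ratio condition on a cell lets Q be read off either pair of
   opposite edges: Q = (a/b)(G_{m,n}-G_{m-1,n})/(G_{m,n+1}-G_{m,n})
   = (b/a)(G_{m-1,n+1}-G_{m-1,n})/(G_{m,n+1}-G_{m-1,n+1}).  Combined with
   the fact that the two paths around a cell have the same displacement, this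
   expresses the ratio of the two edges of a cell at a corner as a Moebius
   function of Q.  Around the vertex G_{m-1,n+1}, shared by the cells (m,n),
   (m,n+1), (m-1,n) and (m-1,n+1), these ratios multiply up to
     Q_{m-1,n+1} (a E2 + b')/(a + b' E2) = Q_{m,n} (a' E1 + b)/(a' + b E1),
   with E1 = Q_{m,n+1} and E2 = Q_{m-1,n}.  Choosing the logarithms of the two
   Moebius factors so that this identity holds additively after taking logs,
   the claimed expansion becomes a rational identity: the coefficients of
   F_{m,n+1} and F_{m-1,n} on both sides agree. *)

Lemma cexp_add (z w : C) : cexp (z + w) = (cexp z * cexp w)%C.
Proof.
  destruct z as [x y], w as [x' y']; unfold cexp, Cmult, Cplus; simpl.
  rewrite exp_plus, cos_plus, sin_plus.
  apply injective_projections; simpl; ring.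
Qed.

Lemma cexp_neq0 (z : C) : cexp z <> 0%C.
Proof.
  destruct z as [x y]; unfold cexp; simpl; intro H.
  apply (f_equal fst) in H as Hc; apply (f_equal snd) in H as Hs; simpl in Hc, Hs.
  pose proof (exp_pos x); pose proof (sin2_cos2 y); unfold Rsqr in *.
  assert (cos y = 0) by (apply (Rmult_eq_reg_l (exp x)); lra).
  assert (sin y = 0) by (apply (Rmult_eq_reg_l (exp x)); lra).
  nra.
Qed.

Lemma cos_sin_surjective (c s : R) :
  c * c + s * s = 1 -> exists t, cos t = c /\ sin t = s.
Proof.
  intro Hcs.
  assert (Hc : -1 <= c <= 1) by nra.
  assert (Hsin : sin (acos c) = Rabs s).
  { rewrite sin_acos by exact Hc; rewrite <- sqrt_Rsqr_abs; f_equal.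
    unfold Rsqr; lra. }
  destruct (Rle_dec 0 s) as [Hs | Hs].
  - exists (acos c); rewrite cos_acos, Hsin, Rabs_right by lra; auto.
  - exists (- acos c); rewrite cos_neg, sin_neg, cos_acos, Hsin, Rabs_left by lra.
    split; [reflexivity | ring].
Qed.

Lemma cexp_surjective (z : C) : z <> 0%C -> exists L, cexp L = z.
Proof.
  intro Hz; apply Cmod_gt_0 in Hz as Hr.
  assert (Hr2 : Cmod z * Cmod z = Re z * Re z + Im z * Im z).
  { unfold Cmod; rewrite sqrt_sqrt; unfold Re, Im; nra. }
  destruct (cos_sin_surjective (Re z / Cmod z) (Im z / Cmod z)) as (t & Hc & Hs).
  { transitivity ((Re z * Re z + Im z * Im z) / (Cmod z * Cmod z)); [field; lra|].
    rewrite <- Hr2; field; lra. }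
  exists (ln (Cmod z), t); unfold cexp; simpl.
  rewrite exp_ln, Hc, Hs by exact Hr.
  destruct z; apply injective_projections; simpl; field; lra.
Qed.

Lemma cexp_log_of_mul_eq (z w X1 X2 : C) :
  (cexp z * X2 = cexp w * X1)%C -> X1 <> 0%C ->
  exists L1 L2, cexp L1 = X1 /\ cexp L2 = X2 /\ (z + L2 = w + L1)%C.
Proof.
  intros Hmul HX1.
  destruct (cexp_surjective X1 HX1) as [L1 HL1].
  exists L1, (w + L1 - z)%C; repeat split; [exact HL1 | | ring].
  pose proof (cexp_neq0 z) as Hz.
  replace (cexp (w + L1 - z)) with (cexp z * cexp (w + L1 - z) / cexp z)%C
    by (field; exact Hz).
  replace X2 with (cexp z * X2 / cexp z)%C by (field; exact Hz).
  rewrite Hmul, <- HL1, <- !cexp_add.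
  do 2 f_equal; ring.
Qed.

Lemma Cinv_0 : Cinv 0 = 0%C.
Proof. unfold Cinv; simpl; apply injective_projections; simpl; unfold Rdiv; ring. Qed.

Lemma Cdiv_neq0 (x y : C) : x <> 0%C -> y <> 0%C -> (x / y)%C <> 0%C.
Proof.
  intros Hx Hy H; apply Hx.
  replace x with (x / y * y)%C by (field; exact Hy).
  rewrite H; ring.
Qed.

Section CellAlgebra.
Local Open Scope C_scope.

Lemma CR_dual_quotient (a b q1 q2 q3 q4 : C) :
  a <> 0 -> b <> 0 -> q2 <> q3 -> q4 <> q1 -> q3 <> q4 ->
  CR q1 q2 q3 q4 = b * b / (a * a) ->
  b * (q4 - q1) = a * (a / b * ((q2 - q1) / (q3 - q2))) * (q3 - q4).
Proof.
  intros Ha Hb H23 H41 H34 HCR.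
  pose proof (Cminus_eq_contra _ _ (not_eq_sym H23)).
  apply Cminus_eq_contra in H23, H41, H34.
  symmetry; transitivity (a * a / b * CR q1 q2 q3 q4 * (q4 - q1)).
  - unfold CR; field; repeat split; auto.
  - rewrite HCR; field; auto.
Qed.

(* [x], [y], [z], [w] are the edges q2-q1, q3-q2, q4-q1, q3-q4 of a cell,
   so that x + y = z + w. *)
Lemma cell_corner_first (a b Q x y z w : C) :
  x + y = z + w -> a * x = b * Q * y -> b * z = a * Q * w ->
  a * x * (a + b * Q) = b * z * (a * Q + b).
Proof.
  intros Hsum Hx Hz.
  replace (a * x * (a + b * Q)) with (a * (a * x) + a * b * Q * x) by ring.
  replace (b * z * (a * Q + b)) with (a * b * Q * z + b * (b * z)) by ring.
  rewrite Hx, Hz.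
  transitivity (a * b * Q * (x + y)); [ring | rewrite Hsum; ring].
Qed.

Lemma cell_corner_third (a b Q x y z w : C) :
  x + y = z + w -> a * x = b * Q * y -> b * z = a * Q * w ->
  b * y * (a + b * Q) = a * w * (a * Q + b).
Proof.
  intros Hsum Hx Hz.
  replace (b * y * (a + b * Q)) with (a * b * y + b * (b * Q * y)) by ring.
  replace (a * w * (a * Q + b)) with (a * (a * Q * w) + a * b * w) by ring.
  rewrite <- Hx, <- Hz.
  transitivity (a * b * (x + y)); [ring | rewrite Hsum; ring].
Qed.

(* Used with alpha = G_{m-1,n+1} - G_{m-1,n}, omega = G_{m,n+1} - G_{m-1,n+1},
   tau = G_{m-1,n+2} - G_{m-1,n+1}, sigma = G_{m-1,n+1} - G_{m-2,n+1}: the four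
   edges at the vertex G_{m-1,n+1}. *)
Lemma vertex_star_identity (a a' b b' E1 E2 Q0 Q3 alpha omega tau sigma : C) :
  a <> 0 -> b' <> 0 -> omega <> 0 -> tau <> 0 ->
  a' + b * E1 <> 0 -> a + b' * E2 <> 0 ->
  b * alpha = a * Q0 * omega ->
  a' * sigma = b' * Q3 * tau ->
  a' * omega * (a' + b * E1) = b * tau * (a' * E1 + b) ->
  b' * alpha * (a + b' * E2) = a * sigma * (a * E2 + b') ->
  Q3 * ((a * E2 + b') / (a + b' * E2)) = Q0 * ((a' * E1 + b) / (a' + b * E1)).
Proof.
  intros Ha Hb' Hom Hta HX1 HX2 Hdual Hdef Hright Hleft.
  set (k := a * b' * omega * tau).
  assert (Hk : k <> 0) by (repeat apply Cmult_neq_0; auto).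
  assert (Hcross : Q3 * (a * E2 + b') * (a' + b * E1) * k
                   = Q0 * (a' * E1 + b) * (a + b' * E2) * k).
  { transitivity ((a * sigma * (a * E2 + b')) * (a' * omega * (a' + b * E1))).
    { transitivity (b' * Q3 * tau * (a * omega) * (a * E2 + b') * (a' + b * E1)).
      { unfold k; ring. }
      rewrite <- Hdef; ring. }
    rewrite <- Hleft, Hright.
    transitivity (b * alpha * (b' * tau * (a' * E1 + b) * (a + b' * E2))); [ring|].
    rewrite Hdual; unfold k; ring. }
  transitivity (Q3 * (a * E2 + b') * (a' + b * E1) * k
                / ((a + b' * E2) * (a' + b * E1) * k)); [field; auto|].
  rewrite Hcross; field; auto.
Qed.

End CellAlgebra.

(* Equivalently, p m n = f m + g n for some f and g. *)
Definition parallelogram_net (p : Z -> Z -> C) : Prop :=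
  forall m m' n n' : Z, (p m n - p m' n = p m n' - p m' n')%C.

Lemma lattice_parallelogram_net (u v : R -> R) (eps : R) :
  parallelogram_net (lattice u v eps).
Proof.
  intros m m' n n'; unfold lattice, Cminus, Cplus, Copp; simpl.
  apply injective_projections; simpl; ring.
Qed.

Section CRMapping.
Local Open Scope C_scope.
Variables (p G : Z -> Z -> C).
Local Notation hstep m n := (p m n - p (m - 1)%Z n).
Local Notation vstep m n := (p m (n + 1)%Z - p m n).

Lemma parallelogram_net_vert :
  parallelogram_net p ->
  forall m m' n n' : Z, p m n - p m n' = p m' n - p m' n'.
Proof.
  intros Hp m m' n n'.
  transitivity (p m n - p m' n + p m' n - p m n'); [ring|].
  rewrite (Hp m m' n n'); ring.
Qed.

Lemma Qf_neq0_steps (m n : Z) :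
  Qf p G m n <> 0 -> vstep m n <> 0 /\ hstep m n <> 0.
Proof.
  unfold Qf; intro HQ; split; intro H; apply HQ; rewrite H; unfold Cdiv.
  - ring.
  - rewrite Cinv_0; ring.
Qed.

Lemma CR_parallelogram_cell (m n : Z) :
  parallelogram_net p -> vstep m n <> 0 ->
  CR (p (m - 1)%Z n) (p m n) (p m (n + 1)%Z) (p (m - 1)%Z (n + 1)%Z)
  = hstep m n * hstep m n / (vstep m n * vstep m n).
Proof.
  intros Hp Hv; unfold CR.
  rewrite <- (Hp m (m - 1)%Z n (n + 1)%Z).
  rewrite (parallelogram_net_vert Hp (m - 1)%Z m (n + 1)%Z n).
  field; split; [exact Hv|].
  intro H; apply Hv.
  replace (vstep m n) with (- (p m n - p m (n + 1)%Z)) by ring.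
  rewrite H; ring.
Qed.

Hypotheses (Hp : parallelogram_net p) (HG : CR_mapping p G).

Lemma Qf_def_mul (m n : Z) :
  hstep m n <> 0 ->
  vstep m n * (G m n - G (m - 1)%Z n)
  = hstep m n * Qf p G m n * (G m (n + 1)%Z - G m n).
Proof.
  intro Hh.
  destruct (HG m n) as [(_ & _ & _ & H23 & _) _].
  apply not_eq_sym, Cminus_eq_contra in H23.
  unfold Qf; field; split; assumption.
Qed.

Lemma Qf_dual_mul (m n : Z) :
  vstep m n <> 0 -> hstep m n <> 0 ->
  hstep m n * (G (m - 1)%Z (n + 1)%Z - G (m - 1)%Z n)
  = vstep m n * Qf p G m n * (G m (n + 1)%Z - G (m - 1)%Z (n + 1)%Z).
Proof.
  intros Hv Hh.
  destruct (HG m n) as [(_ & _ & H14 & H23 & _ & H34) HCR].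
  rewrite CR_parallelogram_cell in HCR by assumption.
  apply CR_dual_quotient; auto.
Qed.

Lemma Qf_corner_first (m n : Z) :
  vstep m n <> 0 -> hstep m n <> 0 ->
  vstep m n * (G m n - G (m - 1)%Z n)
    * (vstep m n + hstep m n * Qf p G m n)
  = hstep m n * (G (m - 1)%Z (n + 1)%Z - G (m - 1)%Z n)
    * (vstep m n * Qf p G m n + hstep m n).
Proof.
  intros Hv Hh.
  apply cell_corner_first with (y := G m (n + 1)%Z - G m n)
    (w := G m (n + 1)%Z - G (m - 1)%Z (n + 1)%Z).
  - ring.
  - apply Qf_def_mul; exact Hh.
  - apply Qf_dual_mul; assumption.
Qed.

Lemma Qf_corner_third (m n : Z) :
  vstep m n <> 0 -> hstep m n <> 0 ->
  hstep m n * (G m (n + 1)%Z - G m n)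
    * (vstep m n + hstep m n * Qf p G m n)
  = vstep m n * (G m (n + 1)%Z - G (m - 1)%Z (n + 1)%Z)
    * (vstep m n * Qf p G m n + hstep m n).
Proof.
  intros Hv Hh.
  apply cell_corner_third with (x := G m n - G (m - 1)%Z n)
    (z := G (m - 1)%Z (n + 1)%Z - G (m - 1)%Z n).
  - ring.
  - apply Qf_def_mul; exact Hh.
  - apply Qf_dual_mul; assumption.
Qed.

Lemma Qf_vertex_identity (m n : Z) :
  let a := p m (n + 1)%Z - p m n in
  let a' := p m (n + 2)%Z - p m (n + 1)%Z in
  let b := p m n - p (m - 1)%Z n in
  let b' := p (m - 1)%Z n - p (m - 2)%Z n in
  let E1 := Qf p G m (n + 1)%Z in
  let E2 := Qf p G (m - 1)%Z n in
  Qf p G m n <> 0 -> E1 <> 0 -> E2 <> 0 ->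
  a' + b * E1 <> 0 -> a + b' * E2 <> 0 ->
  Qf p G (m - 1)%Z (n + 1)%Z * ((a * E2 + b') / (a + b' * E2))
  = Qf p G m n * ((a' * E1 + b) / (a' + b * E1)).
Proof.
  intros a a' b b' E1 E2 HQ0 HE1 HE2 HX1 HX2.
  assert (Hn : (n + 1 + 1 = n + 2)%Z) by lia.
  assert (Hm : (m - 1 - 1 = m - 2)%Z) by lia.
  assert (Hb1 : p m (n + 1)%Z - p (m - 1)%Z (n + 1)%Z = b) by apply Hp.
  assert (Hb2 : p (m - 1)%Z (n + 1)%Z - p (m - 2)%Z (n + 1)%Z = b') by apply Hp.
  assert (Ha1 : p (m - 1)%Z (n + 1)%Z - p (m - 1)%Z n = a)
    by (symmetry; apply parallelogram_net_vert, Hp).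
  assert (Ha2 : p (m - 1)%Z (n + 2)%Z - p (m - 1)%Z (n + 1)%Z = a')
    by (symmetry; apply parallelogram_net_vert, Hp).
  destruct (Qf_neq0_steps m n HQ0) as [Ha Hb].
  destruct (Qf_neq0_steps m (n + 1)%Z HE1) as [Ha' _]; rewrite Hn in Ha'.
  destruct (Qf_neq0_steps (m - 1)%Z n HE2) as [_ Hb']; rewrite Hm in Hb'.
  destruct (HG m n) as [(_ & _ & _ & _ & _ & Hom) _].
  destruct (HG m (n + 1)%Z) as [(_ & _ & Hta & _) _]; rewrite Hn in Hta.
  pose proof (Qf_dual_mul m n Ha Hb) as Hdual.
  pose proof (Qf_def_mul (m - 1)%Z (n + 1)%Z) as Hdef.
  pose proof (Qf_corner_first m (n + 1)%Z) as Hright.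
  pose proof (Qf_corner_third (m - 1)%Z n) as Hleft.
  rewrite Hn, Hm in Hdef; rewrite Hn in Hright; rewrite Hm in Hleft.
  rewrite Hb2, Ha2 in Hdef; rewrite Hb1 in Hright; rewrite Ha1 in Hleft.
  apply vertex_star_identity with
    (alpha := G (m - 1)%Z (n + 1)%Z - G (m - 1)%Z n)
    (omega := G m (n + 1)%Z - G (m - 1)%Z (n + 1)%Z)
    (tau := G (m - 1)%Z (n + 2)%Z - G (m - 1)%Z (n + 1)%Z)
    (sigma := G (m - 1)%Z (n + 1)%Z - G (m - 2)%Z (n + 1)%Z);
    auto using Cminus_eq_contra.
Qed.

End CRMapping.

Theorem theorem3p1
  (u v : R -> R)
  (Hu : forall x : R, ex_derive u x /\ (0 < Derive u x)%R)
  (Hv : forall x : R, ex_derive v x /\ (0 < Derive v x)%R)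
  (eps : R) (Heps : (0 < eps)%R)
  (G F : Z -> Z -> C)
  (HG : CR_mapping (lattice u v eps) G)
  (HF : forall m n : Z,
      cexp (RtoC eps * F m n)%C = Qf (lattice u v eps) G m n)
  (m n : Z) :
  let p := lattice u v eps in
  let a  := (p m (n+1)%Z - p m n)%C in
  let a' := (p m (n+2)%Z - p m (n+1)%Z)%C in
  let b  := (p m n - p (m-1)%Z n)%C in
  let b' := (p (m-1)%Z n - p (m-2)%Z n)%C in
  let E1 := cexp (RtoC eps * F m (n+1)%Z)%C in
  let E2 := cexp (RtoC eps * F (m-1)%Z n)%C in
  (b' + a)%C <> RtoC 0 ->
  (b + a')%C <> RtoC 0 ->
  (a' + b * E1)%C <> RtoC 0 ->
  (a' * E1 + b)%C <> RtoC 0 ->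
  (a + b' * E2)%C <> RtoC 0 ->
  (a * E2 + b')%C <> RtoC 0 ->
  let M  := (- ((b * b' - a * a') / ((b' + a) * (b + a'))))%C in
  let Xi := (- ((b * a - b' * a') / (Ci * RtoC eps * ((b' + a) * (b + a')))))%C in
  (* "appropriate branches of log": there exist logarithms L1, L2 of the two
     arguments for which the identity holds *)
  exists L1 L2 : C,
    cexp L1 = ((a' * E1 + b) / (a' + b * E1))%C /\
    cexp L2 = ((a * E2 + b') / (a + b' * E2))%C /\
    let Rem := (/ (RtoC eps * RtoC eps * RtoC eps) *
                (L1 + RtoC eps * ((b - a') / (b + a')) * F m (n+1)%Z
                 - L2 - RtoC eps * ((b' - a) / (b' + a)) * F (m-1)%Z n))%C in
    (F (m-1)%Z (n+1)%Z - F m n)%C =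
    (M * (F m (n+1)%Z - F (m-1)%Z n)
     + RtoC 2 * Ci * RtoC eps * Xi * ((F m (n+1)%Z + F (m-1)%Z n) / RtoC 2)
     + RtoC eps * RtoC eps * Rem)%C.
Proof.
  intros p a a' b b' E1 E2 Hba Hba' HX1n HX1d HX2n HX2d M Xi.
  (* Q = e^{eps F} never vanishes. *)
  assert (HQ : forall k l, Qf p G k l <> 0%C)
    by (intros k l; rewrite <- HF; apply cexp_neq0).
  assert (Hmul : (cexp (RtoC eps * F (m - 1)%Z (n + 1)%Z)
                  * ((a * E2 + b') / (a + b' * E2))
                  = cexp (RtoC eps * F m n) * ((a' * E1 + b) / (a' + b * E1)))%C).
  { unfold E1, E2 in *; rewrite !HF in *.
    apply Qf_vertex_identity; auto using lattice_parallelogram_net. }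
  destruct (cexp_log_of_mul_eq _ _ _ _ Hmul (Cdiv_neq0 _ _ HX1d HX1n))
    as (L1 & L2 & HL1 & HL2 & Hlog).
  exists L1, L2; repeat split; [exact HL1 | exact HL2 |].
  intro Rem; unfold Rem, M, Xi.
  assert (Heps0 : RtoC eps <> 0%C)
    by (intro H; apply (f_equal fst) in H; simpl in H; lra).
  assert (HF3 : F (m - 1)%Z (n + 1)%Z = (F m n + (L1 - L2) / RtoC eps)%C).
  { replace (F (m - 1)%Z (n + 1)%Z)
      with ((RtoC eps * F (m - 1)%Z (n + 1)%Z + L2 - L2) / RtoC eps)%C
      by (field; exact Heps0).
    rewrite Hlog; field; exact Heps0. }
  rewrite HF3.
  assert (Hi : Ci <> 0%C) by (intro H; apply (f_equal snd) in H; simpl in H; lra).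
  field; repeat split; auto.
Qed.
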